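(* Let $\mathcal{D}$ be a set of Borel probability distributions on $\mathbb{R}^n$, $(\Theta,\rho)$ a metric space, $\theta:\mathcal D\to\Theta$, $\tau>0$, $\varepsilon>0$, $\alpha\in[0,1)$. Any randomized SQ algorithm estimating $\theta(D)$ over $\mathcal{D}$ with precision $\varepsilon$ and probability of success at least $1-\alpha$ must make at least $$q\ge\frac{\log\big((1-\alpha)\,\mathrm{pk}_{(\theta(\mathcal D),\rho)}(\varepsilon)\big)}{\log(1+\lfloor1/\tau\rfloor)}$$ queries to $\mathrm{STAT}(\tau)$, where $\theta(\mathcal D)=\{\theta(D):D\in\mathcal D\}$.
   Context: For $\mathcal{M}\subseteq\Theta$, an $\varepsilon$-packing of $\mathcal M$ is a subset $\{\theta_1,\dots,\theta_k\}\subseteq\mathcal M$ with $\rho(\theta_i,\theta_j)>2\varepsilon$ for all $i\neq j$; $\mathrm{pk}_{(\mathcal M,\rho)}(\varepsilon)$ is the largest cardinality of such a packing (possibly infinite). SQ framework: a $\mathrm{STAT}(\tau)$ oracle for $D$ answers each measurable query $r:\mathbb{R}^n\to[-1,1]$ with an arbitrary adversarial real $a$ (possibly depending on previous queries) with $|a-\mathbb{E}_D[r]|\le\tau$. A deterministic SQ algorithm making $q$ queries chooses each query as a function of previous answers and outputs an element of $\Theta$ that is a function of all $q$ answers. A randomized SQ algorithm is a probability distribution over deterministic SQ algorithms making $q$ queries; it estimates $\theta$ over $\mathcal{D}$ with precision $\varepsilon$ and probability of success $1-\alpha$ if for every $D\in\mathcal D$ and every valid $\mathrm{STAT}(\tau)$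 oracle for $D$, with probability at least $1-\alpha$ its output $\hat\theta$ satisfies $\rho(\theta(D),\hat\theta)\le\varepsilon$. *)

From HB Require Import structures.
From mathcomp Require Import all_boot all_order all_algebra.
From mathcomp Require Import all_classical all_reals all_analysis.
Set Implicit Arguments. Unset Strict Implicit. Unset Printing Implicit Defensive.
Import Order.TTheory GRing.Theory Num.Theory.
Local Open Scope classical_set_scope.
Local Open Scope ring_scope.

(* R^n, with the product sigma-algebra of the Borel sets of R (= Borel sets of R^n). *)
Definition Rn (R : realType) (n : nat) := n.-tuple R.

Record sq_query (R : realType) (n : nat) := SQQuery {
  sq_fun :> n.-tuple R -> R ;
  sq_meas : measurable_fun [set: n.-tuple R] sq_fun ;
  sq_bdd : forall x, -1 <= sq_fun x <= 1 }.

(* E_D[r] (an extended real; finite since r is bounded and measurable). *)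
Definition sq_expect (R : realType) (n : nat) (D : probability (n.-tuple R) R)
    (r : sq_query R n) : \bar R :=
  (\int[D]_x (sq_fun r x)%:E)%E.

(* An oracle answers the current query r as a function of the previously asked
   queries (adversarial, may depend on them) and r itself. *)
Definition sq_oracle (R : realType) (n : nat) :=
  seq (sq_query R n) -> sq_query R n -> R.

Definition valid_STAT (R : realType) (n : nat) (tau : R)
    (D : probability (n.-tuple R) R) (O : sq_oracle R n) : Prop :=
  forall (hist : seq (sq_query R n)) (r : sq_query R n),
    (`| (O hist r)%:E - sq_expect D r | <= tau%:E)%E.

Record det_sq_alg (R : realType) (n : nat) (Theta : Type) := DetSQAlg {
  alg_query : seq R -> sq_query R n ;
  alg_output : seq R -> Theta }.

Fixpoint sq_transcript (R : realType) (n : nat) (Theta : Type)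
    (A : det_sq_alg R n Theta) (O : sq_oracle R n) (k : nat)
    : seq (sq_query R n) * seq R :=
  match k with
  | 0 => ([::], [::])
  | k'.+1 =>
      let: (qs, ans) := sq_transcript A O k' in
      let r := alg_query A ans in
      (rcons qs r, rcons ans (O qs r))
  end.

Definition sq_run (R : realType) (n : nat) (Theta : Type)
    (A : det_sq_alg R n Theta) (O : sq_oracle R n) (q : nat) : Theta :=
  alg_output A (sq_transcript A O q).2.

(* A randomized SQ algorithm making q queries is a probability distribution over
   deterministic SQ algorithms, given as a random element
   A : Omega -> det_sq_alg on a probability space (Omega, P).
   It estimates theta over DD with precision eps and success probability
   1 - alpha if for every D in DD and every valid STAT(tau) oracle O, the
   success event has (inner) probability at least 1 - alpha. *)
Definition rand_sq_estimates (R : realType) (n : nat) (Theta : Type)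
    (rho : Theta -> Theta -> R)
    (DD : set (probability (n.-tuple R) R))
    (theta : probability (n.-tuple R) R -> Theta)
    (tau eps alpha : R) (q : nat)
    (dO : measure_display) (Omega : measurableType dO) (P : probability Omega R)
    (A : Omega -> det_sq_alg R n Theta) : Prop :=
  forall D, DD D -> forall O : sq_oracle R n, valid_STAT tau D O ->
    exists S : set Omega, [/\ measurable S,
      S `<=` [set w | rho (theta D) (sq_run (A w) O q) <= eps] &
      (P S >= (1 - alpha)%:E)%E].

Definition is_metric (R : realType) (Theta : Type) (rho : Theta -> Theta -> R) :=
  [/\ forall x y, 0 <= rho x y,
      forall x y, rho x y = 0 <-> x = y,
      forall x y, rho x y = rho y x &
      forall x y z, rho x z <= rho x y + rho y z].

Definition is_packing (R : realType) (Theta : Type) (rho : Theta -> Theta -> R)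
    (M : set Theta) (eps : R) (k : nat) (f : 'I_k -> Theta) : Prop :=
  (forall i, M (f i)) /\
  (forall i j : 'I_k, i != j -> 2 * eps < rho (f i) (f j)).

(* pk_(M,rho)(eps): the largest cardinality of an eps-packing of M, as an
   extended real (+oo if packings of every finite size exist). *)
Definition pk (R : realType) (Theta : Type) (rho : Theta -> Theta -> R)
    (M : set Theta) (eps : R) : \bar R :=
  ereal_sup [set (k%:R)%:E | k in [set k : nat | exists f : 'I_k -> Theta, is_packing rho M eps f]].

(* Fix an eps-packing f_1, ..., f_K of theta(DD), with f_i = theta(D_i).  For
   each D_i we build the "rounding" oracle O_i, which answers a query r by the
   point of the grid {-1 + tau + 2 tau j : 0 <= j <= N}, N = floor(1/tau),
   nearest to E_{D_i}[r]; it is a valid STAT(tau) oracle.  Against the O_i the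
   answers of a deterministic algorithm a are determined by q grid indices, so
   its output takes at most (N+1)^q values.  Since the f_i are 2eps-separated,
   each output is eps-close to at most one f_i, hence a succeeds against at
   most (N+1)^q of the oracles O_i.  Averaging over the randomness of the
   algorithm (integrating the sum of the indicators of the success events)
   gives K (1 - alpha) <= (N+1)^q, and taking logarithms yields the theorem. *)

From HB Require Import structures.
From mathcomp Require Import all_boot all_order all_algebra.
From mathcomp Require Import all_classical all_reals all_analysis.
From mathcomp Require Import lra measurable_realfun.
Import Order.TTheory GRing.Theory Num.Theory.
Set Implicit Arguments. Unset Strict Implicit.
Local Open Scope classical_set_scope.
Local Open Scope ring_scope.

Lemma sq_expect_bounded (R : realType) n (D : probability (n.-tuple R) R)
    (r : sq_query R n) :
  (`|sq_expect D r| <= 1%:E)%E.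
Proof.
have mr : measurable_fun [set: n.-tuple R] (EFin \o r).
  by apply/measurable_EFinP; exact: sq_meas.
rewrite /sq_expect; apply: (le_trans (le_abse_integral _ _ mr)) => //.
apply: (@le_trans _ _ (\int[D]_(x in [set: n.-tuple R]) (cst 1%E x))%E).
  apply: ge0_le_integral => //.
  - by apply: measurableT_comp.
  - move=> x _ /=; rewrite lee_fin; have /andP[r_ge r_le] := sq_bdd r x.
    by rewrite ler_norml r_ge r_le.
by rewrite integral_cst // mul1e probability_le1.
Qed.

Definition expect_real (R : realType) n (D : probability (n.-tuple R) R)
    (r : sq_query R n) : R := fine (sq_expect D r).

Lemma expect_realE (R : realType) n (D : probability (n.-tuple R) R)
    (r : sq_query R n) :
  (expect_real D r)%:E = sq_expect D r /\ -1 <= expect_real D r <= 1.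
Proof.
rewrite /expect_real; have := sq_expect_bounded D r.
by case: (sq_expect _ r) => [x| |] //=; rewrite lee_fin ler_norml.
Qed.

Definition grid_point (R : realType) (tau : R) (j : nat) : R :=
  -1 + tau + 2 * tau * j%:R.

Definition grid_index (R : realType) (N : nat) (tau x : R) : 'I_N.+1 :=
  inord (Num.truncn ((x + 1) / (2 * tau))).

Lemma grid_round_close (R : realType) (tau x : R) : 0 < tau -> -1 <= x <= 1 ->
  `|grid_point tau (grid_index (Num.truncn tau^-1) tau x) - x| <= tau.
Proof.
move=> tau0 /andP[x_ge x_le].
set y := (x + 1) / (2 * tau).
have y0 : 0 <= y by apply: divr_ge0; lra.
have ey : y * (2 * tau) = x + 1 by rewrite /y mulfVK //; lra.
have /andP[jy yj] := truncn_itv y0.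
set j := Num.truncn y in jy yj *.
have jN : (j <= Num.truncn tau^-1)%N.
  rewrite truncn_ge_nat; last by rewrite invr_ge0 ltW.
  apply: (le_trans jy); rewrite /y ler_pdivrMr; last lra.
  by rewrite mulrCA mulVf; lra.
rewrite /grid_point /grid_index -/y -/j inordK; last by rewrite ltnS.
have lo : 2 * tau * j%:R <= x + 1 by rewrite -ey mulrC ler_wpM2r //; lra.
have hi : x + 1 < (j.+1)%:R * (2 * tau) by rewrite -ey ltr_pM2r //; lra.
rewrite -natr1 in hi.
by rewrite ler_norml; apply/andP; split; lra.
Qed.

Definition rounding_oracle (R : realType) n (tau : R)
    (D : probability (n.-tuple R) R) : sq_oracle R n :=
  fun _ r => grid_point tau (grid_index (Num.truncn tau^-1) tau (expect_real D r)).

Lemma rounding_oracle_valid (R : realType) n (tau : R)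
    (D : probability (n.-tuple R) R) :
  0 < tau -> valid_STAT tau D (rounding_oracle tau D).
Proof.
move=> tau0 hs r; have [<- Dr_bnd] := expect_realE D r.
by rewrite -EFinB /= lee_fin; exact: grid_round_close.
Qed.

Lemma transcript_query_oracle (R : realType) n (Theta : Type)
    (a : det_sq_alg R n Theta) (h : sq_query R n -> R) (O : sq_oracle R n) :
  (forall hs r, O hs r = h r) -> forall k,
  size (sq_transcript a O k).1 = k /\
  (sq_transcript a O k).2 = map h (sq_transcript a O k).1.
Proof.
move=> hO; elim=> [|k [IH1 IH2]] //=.
move: IH1 IH2; case: (sq_transcript a O k) => qs ans /= size_qs ->.
by rewrite size_rcons map_rcons size_qs hO.
Qed.

Lemma separated_unique_close (R : realType) (Theta : Type) (I : eqType)
    (rho : Theta -> Theta -> R) (eps : R) (f : I -> Theta) (o : Theta) :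
  is_metric rho -> (forall i j, i != j -> 2 * eps < rho (f i) (f j)) ->
  forall i j, rho (f i) o <= eps -> rho (f j) o <= eps -> i = j.
Proof.
case=> _ _ rho_sym rho_tri sep i j hi hj; apply/eqP; apply: contraT => nij.
have := rho_tri (f i) o (f j); rewrite (rho_sym o (f j)).
by move: (sep _ _ nij); lra.
Qed.

Section CodedOracles.
Variables (R : realType) (n : nat) (Theta : Type) (I : finType) (m : nat).
Variables (val : 'I_m -> R) (code_of : I -> sq_query R n -> 'I_m).

Definition coded_oracle (i : I) : sq_oracle R n := fun _ r => val (code_of i r).

Variables (a : det_sq_alg R n Theta) (q : nat).

Let queries (i : I) := (sq_transcript a (coded_oracle i) q).1.

Definition answer_code (i : I) : {ffun 'I_q -> 'I_m} :=
  [ffun t : 'I_q => code_of i (nth (alg_query a [::]) (queries i) t)].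

Lemma transcript_coded (i : I) :
  size (queries i) = q /\
  (sq_transcript a (coded_oracle i) q).2 = map (val \o code_of i) (queries i).
Proof. exact: (transcript_query_oracle a (h := val \o code_of i)). Qed.

Lemma run_determined_by_code (i j : I) :
  answer_code i = answer_code j ->
  sq_run a (coded_oracle i) q = sq_run a (coded_oracle j) q.
Proof.
move=> eq_code; rewrite /sq_run; congr (alg_output a _).
have [size_i ans_i] := transcript_coded i.
have [size_j ans_j] := transcript_coded j.
apply: (@eq_from_nth _ 0); first by rewrite ans_i ans_j !size_map size_i size_j.
move=> t; rewrite ans_i size_map size_i => tq.
rewrite ans_j !(nth_map (alg_query a [::])) ?size_i ?size_j //=.
have := congr1 (fun g : {ffun 'I_q -> 'I_m} => g (Ordinal tq)) eq_code.
by rewrite !ffunE /= => ->.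
Qed.

Lemma coded_successes_card (rho : Theta -> Theta -> R) (eps : R)
    (f : I -> Theta) :
  is_metric rho -> (forall i j, i != j -> 2 * eps < rho (f i) (f j)) ->
  (#|[set i | (rho (f i) (sq_run a (coded_oracle i) q) <= eps)%R]%SET|
     <= m ^ q)%N.
Proof.
move=> hrho sep.
suff code_inj :
    {in [set i | rho (f i) (sq_run a (coded_oracle i) q) <= eps]%SET &,
     injective answer_code}.
  apply: (leq_trans (@leq_card_in _ _ answer_code _ code_inj)).
  by rewrite card_ffun !card_ord.
move=> i j; rewrite !inE => hi hj /run_determined_by_code eq_run.
by rewrite eq_run in hi; exact: separated_unique_close hrho sep _ _ hi hj.
Qed.

End CodedOracles.

Lemma sum_prob_le_overlap (R : realType) (d : measure_display)
    (Omega : measurableType d) (P : probability Omega R) (I : finType)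
    (S : I -> set Omega) (M : nat) :
  (forall i, measurable (S i)) ->
  (forall w, #|[set i | w \in S i]%SET| <= M)%N ->
  (\sum_(i : I) P (S i) <= M%:R%:E)%E.
Proof.
move=> mS overlap.
have mI i : measurable_fun [set: Omega] (fun x => (\1_(S i) x)%:E).
  by apply/measurable_EFinP; exact: measurable_indic.
have -> : (\sum_(i : I) P (S i) =
    \int[P]_(x in [set: Omega]) (\sum_(i : I) (\1_(S i) x)%:E))%E.
  rewrite ge0_integral_sum //; apply: eq_bigr => i _.
  by rewrite integral_indic ?setIT.
apply: (@le_trans _ _ (\int[P]_(x in [set: Omega]) (cst M%:R%:E x))%E).
  apply: ge0_le_integral => //.
  - by move=> x _; apply: sume_ge0 => i _; rewrite lee_fin.
  - exact: emeasurable_sum.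
  - move=> x _ /=; rewrite sumEFin lee_fin.
    rewrite (eq_bigr (fun i => (x \in S i)%:R)); last by move=> i _; rewrite indicE.
    rewrite -natr_sum ler_nat (leq_trans _ (overlap x)) // -sum1_card.
    rewrite [X in (_ <= X)%N]big_mkcond; apply/eq_leq/eq_bigr => i _.
    by rewrite inE; case: (x \in S i).
rewrite integral_cst // -[X in (_ <= X)%E]mule1.
by apply: lee_wpmul2l; [rewrite lee_fin | exact: probability_le1].
Qed.

Lemma packing_of_pk_lower_bound (R : realType) (Theta : Type)
    (rho : Theta -> Theta -> R) (M : set Theta) (eps : R) (k : nat) :
  ((k%:R)%:E <= pk rho M eps)%E ->
  exists K (f : 'I_K -> Theta), is_packing rho M eps f /\ (k <= K)%N.
Proof.
move=> k_le_pk.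
have : ((k%:R - 2^-1)%:E < pk rho M eps)%E.
  by apply: lt_le_trans k_le_pk; rewrite lte_fin; lra.
clear k_le_pk; move/ereal_sup_gt => [_ [K [f f_pack] <-]]; rewrite lte_fin => K_gt.
exists K, f; split=> //; rewrite leqNgt; apply/negP.
by rewrite -(ler_nat R) -natr1 => ?; lra.
Qed.

Lemma packing_size_bound (R : realType) (n : nat)
    (DD : set (probability (n.-tuple R) R))
    (Theta : Type) (rho : Theta -> Theta -> R) (hrho : is_metric rho)
    (theta : probability (n.-tuple R) R -> Theta)
    (tau eps alpha : R) (htau : 0 < tau)
    (q : nat) (dO : measure_display) (Omega : measurableType dO)
    (P : probability Omega R) (A : Omega -> det_sq_alg R n Theta) :
  rand_sq_estimates rho DD theta tau eps alpha q P A ->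
  forall K (f : 'I_K -> Theta), is_packing rho (theta @` DD) eps f ->
  (1 - alpha) * K%:R <= ((Num.truncn tau^-1).+1)%:R ^+ q.
Proof.
move=> estimates K f [f_in sep].
have centre i : exists D, DD D /\ theta D = f i.
  by have [D DD_D theta_D] := f_in i; exists D.
have [Ds Ds_spec] := choice centre.
set N := Num.truncn tau^-1.
pose code_of i r := grid_index N tau (expect_real (Ds i) r).
pose O := coded_oracle (grid_point tau) code_of.
have success_event i : exists S : set Omega, [/\ measurable S,
    S `<=` [set w | rho (f i) (sq_run (A w) (O i) q) <= eps] &
    ((1 - alpha)%:E <= P S)%E].
  have [DD_i theta_i] := Ds_spec i.
  by rewrite -theta_i; exact: estimates _ DD_i _ (rounding_oracle_valid _ htau).
have [S S_spec] := choice success_event.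
have overlap w : (#|[set i | w \in S i]%SET| <= N.+1 ^ q)%N.
  apply: (leq_trans _ (coded_successes_card (grid_point tau) code_of (A w) q hrho sep)).
  apply: subset_leq_card; apply/fintype.subsetP => i; rewrite !inE => w_Si.
  by have [_ S_succ _] := S_spec i; exact: S_succ.
rewrite -lee_fin -natrX.
have S_meas i : measurable (S i) by have [] := S_spec i.
apply: le_trans (sum_prob_le_overlap P S_meas overlap).
have -> : (((1 - alpha) * K%:R)%:E = \sum_(i < K) (1 - alpha)%:E)%E.
  by rewrite sumEFin sumr_const card_ord mulr_natr.
by apply: lee_sum => i _; have [] := S_spec i.
Qed.

(* Taking logarithms: x <= b^q with b >= 1 gives ln x <= q ln b (recall that
   ln vanishes on nonpositive reals). *)
Lemma ln_le_of_le_pow (R : realType) (x b : R) (q : nat) :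
  1 <= b -> x <= b ^+ q -> ln x <= q%:R * ln b.
Proof.
move=> b_ge1 x_le; have [x_le1|x_gt1] := lerP x 1.
  by apply: le_trans (ln_le0 x_le1) _; apply: mulr_ge0 => //; exact: ln_ge0.
rewrite mulr_natl -lnXn; last lra.
by rewrite ler_ln ?posrE //; lra.
Qed.

Theorem theoremH3 (R : realType) (n : nat)
    (DD : set (probability (n.-tuple R) R))
    (Theta : Type) (rho : Theta -> Theta -> R) (hrho : is_metric rho)
    (theta : probability (n.-tuple R) R -> Theta)
    (tau eps alpha : R) (htau : 0 < tau) (heps : 0 < eps)
    (halpha : 0 <= alpha < 1)
    (q : nat) (dO : measure_display) (Omega : measurableType dO)
    (P : probability Omega R) (A : Omega -> det_sq_alg R n Theta) :
  rand_sq_estimates rho DD theta tau eps alpha q P A ->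
  forall k : nat, ((k%:R)%:E <= pk rho (theta @` DD) eps)%E ->
    ln ((1 - alpha) * k%:R) <= q%:R * ln (1 + (Num.floor (tau^-1))%:~R).
Proof.
move=> estimates k k_le_pk; move: halpha => /andP[_ alpha_lt1].
set N := Num.truncn tau^-1.
have floor_N : (Num.floor tau^-1)%:~R = N%:R :> R.
  by rewrite /N truncn_floor invr_ge0 ltW // natr_absz ger0_norm ?floor_ge0 ?invr_ge0 ?ltW.
rewrite floor_N (addrC 1 N%:R) natr1; apply: ln_le_of_le_pow; first by rewrite ler1n.
have [K [f [f_pack k_le_K]]] := packing_of_pk_lower_bound k_le_pk.
apply: le_trans (packing_size_bound hrho htau estimates f_pack).
by rewrite ler_wpM2l ?ler_nat // subr_ge0 ltW.
Qed.
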